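(* Let $F$ be a factbase and $\mathcal R$ a set of existential rules. For each terminating $\mathbf{O}$-chase derivation (resp. $\mathbf{SO}$-chase derivation) from $F$ and $\mathcal R$, there exists a breadth-first terminating $\mathbf{O}$-chase derivation (resp. $\mathbf{SO}$-chase derivation) from $F$ and $\mathcal R$ of smaller or equal depth.
   Context: First-order setting with constants and variables, no function symbols; a factbase is a set of atoms; a homomorphism from $A$ to $B$ is a substitution $\pi$ with $\pi(A)\subseteq B$. An existential rule $R=(B,H)$ is $\forall\bar x\forall\bar y(B(\bar x,\bar y)\to\exists\bar z\,H(\bar x,\bar z))$; its frontier is $\bar x$. A trigger $(R,\pi)$ on $F$ has $\pi:B\to F$ a homomorphism; $\pi^s$ maps each existential variable $z$ to a fresh variable $z_{(R,\pi)}$; $F\cup\pi^s(H)$ is the immediate derivation. A derivation from $F$ and $\mathcal R$ is a (possibly infinite) sequence $D_0=(\emptyset,\emptyset,F)$, $D_i=(R_i,\pi_i,F_i)$, $F_i$ the immediate derivation from $F_{i-1}$ through $(R_i,\pi_i)$, triggers pairwise distinct. For a derivation with last factbase $F_n$, a trigger $(R,\pi)$ is $\mathbf{O}$-applicable if $\pi:B\to F_n$ is a homomorphism, and $\mathbf{SO}$-applicable if moreover no trigger $(R,\pi')$ already in the derivation has $\pi'$ equal to $\pi$ on the frontier of $R$. An $\mathbf{O}$-chase derivation is any derivation; an $\mathbf{SO}$-chase derivation is one where each trigger is $\mathbf{SO}$-applicable on its prefix. Rank: atoms of $F$ have rank 0; another atom $A$ has rank $1+\max_{A'\in\pi(B)}\mathrm{rank}(A')$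 for the first trigger $(R,\pi)$ with $A\in\pi^s(H)$; a trigger has rank $1+\max_{A'\in\pi(B)}\mathrm{rank}(A')$. Depth of a finite derivation: maximal rank of its atoms. A derivation is $\mathrm{X}$-breadth-first if (1) its triggers appear in non-decreasing rank, and (2) for each rank $k$ of a trigger, letting $D_i$ be the last element whose trigger has rank $k$, every trigger $\mathrm{X}$-applicable on $D_1,\dots,D_i$ has rank $k+1$. ''Breadth-first $\mathrm{X}$-chase derivation'' means $\mathrm{X}$-breadth-first $\mathrm{X}$-chase derivation. An $\mathrm{X}$-chase derivation is exhaustive if any trigger $\mathrm{X}$-applicable on $D_1,\dots,D_i$ is either applied at some later $D_k$ ($k\ge i$) or ceases to be $\mathrm{X}$-applicable on some $D_1,\dots,D_k$; terminating means exhaustive and finite. *)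

From Stdlib Require Import List Arith.
Import ListNotations.

(* A fresh variable is named by the
   trigger (R,pi): the rule (body, head), the image under pi of the body
   variables (listed in a canonical order), and the existential variable z. *)
Inductive term : Type :=
| Cst  (c : nat)
| Var  (x : nat)
| Null (b h : list (nat * list term)) (img : list term) (z : nat).

Definition atom : Type := (nat * list term)%type.

Definition factbase : Type := atom -> Prop.

Record rule : Type := mkRule { body : list atom; head : list atom }.

Definition plain_term (u : term) : Prop :=
  match u with Null _ _ _ _ => False | _ => True end.
Definition plain_atom (a : atom) : Prop := Forall plain_term (snd a).
Definition wf_rule (R : rule) : Prop :=
  Forall plain_atom (body R) /\ Forall plain_atom (head R).

Definition vars_term (u : term) : list nat :=
  match u with Var x => [x] | _ => [] end.
Definition vars_atoms (l : list atom) : list nat :=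
  flat_map (fun a => flat_map vars_term (snd a)) l.

Definition subst (s : nat -> term) (u : term) : term :=
  match u with Var x => s x | _ => u end.
Definition subst_atom (s : nat -> term) (a : atom) : atom :=
  (fst a, map (subst s) (snd a)).

Definition hom (s : nat -> term) (B : list atom) (G : factbase) : Prop :=
  forall b, In b B -> G (subst_atom s b).

Definition trig : Type := (rule * (nat -> term))%type.
Definition trig_dflt : trig := (mkRule [] [], fun _ => Cst 0).

Definition same_trig (t t' : trig) : Prop :=
  fst t = fst t' /\
  forall x, In x (vars_atoms (body (fst t))) -> snd t x = snd t' x.

Definition sk (t : trig) (x : nat) : term :=
  if existsb (Nat.eqb x) (vars_atoms (body (fst t))) then snd t x
  else Null (body (fst t)) (head (fst t))
            (map (snd t) (vars_atoms (body (fst t)))) x.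

Definition produced (t : trig) (a : atom) : Prop :=
  In a (map (subst_atom (sk t)) (head (fst t))).

(* A finite derivation D_0, D_1, ..., D_n is represented by the list of its
   triggers [(R_1,pi_1); ...; (R_n,pi_n)] (D_i is [nth (i-1) D]); the
   prefix D_1..D_i is [firstn i D].  [fb F D] is the last factbase F_n. *)
Definition fb (F : factbase) (D : list trig) : factbase :=
  fun a => F a \/ exists t, In t D /\ produced t a.

Definition derivation (Rs : rule -> Prop) (F : factbase) (D : list trig) : Prop :=
  (forall i, i < length D ->
     Rs (fst (nth i D trig_dflt)) /\
     hom (snd (nth i D trig_dflt)) (body (fst (nth i D trig_dflt)))
         (fb F (firstn i D))) /\
  (forall i j, i < j -> j < length D ->
     ~ same_trig (nth i D trig_dflt) (nth j D trig_dflt)).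

Inductive chase_variant : Type := O | SO.

Definition frontier (R : rule) (x : nat) : Prop :=
  In x (vars_atoms (body R)) /\ In x (vars_atoms (head R)).

Definition O_applicable (Rs : rule -> Prop) (F : factbase) (D : list trig)
    (t : trig) : Prop :=
  Rs (fst t) /\ hom (snd t) (body (fst t)) (fb F D) /\
  ~ (exists t', In t' D /\ same_trig t' t).

Definition SO_applicable (Rs : rule -> Prop) (F : factbase) (D : list trig)
    (t : trig) : Prop :=
  O_applicable Rs F D t /\
  ~ (exists t', In t' D /\ fst t' = fst t /\
        forall x, frontier (fst t) x -> snd t' x = snd t x).

Definition applicable (X : chase_variant) :=
  match X with O => O_applicable | SO => SO_applicable end.

Definition chase_derivation (X : chase_variant) (Rs : rule -> Prop)
    (F : factbase) (D : list trig) : Prop :=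
  derivation Rs F D /\
  forall i, i < length D ->
    applicable X Rs F (firstn i D) (nth i D trig_dflt).

(* exhaustive (for a finite derivation); finite + exhaustive = terminating *)
Definition exhaustive (X : chase_variant) (Rs : rule -> Prop)
    (F : factbase) (D : list trig) : Prop :=
  forall i t, i <= length D -> applicable X Rs F (firstn i D) t ->
    (exists k, i <= k /\ k < length D /\ same_trig (nth k D trig_dflt) t) \/
    (exists k, i <= k /\ k <= length D /\
               ~ applicable X Rs F (firstn k D) t).

Definition max_list (l : list nat) : nat := fold_right Nat.max 0 l.

Inductive arank (F : factbase) (D : list trig) : atom -> nat -> Prop :=
| arank_base a : F a -> arank F D a 0
| arank_step a j rs :
    ~ F a -> j < length D ->
    produced (nth j D trig_dflt) a ->
    (forall j', j' < j -> ~ produced (nth j' D trig_dflt) a) ->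
    Forall2 (arank F D)
      (map (subst_atom (snd (nth j D trig_dflt)))
           (body (fst (nth j D trig_dflt)))) rs ->
    arank F D a (S (max_list rs)).

Definition trank (F : factbase) (D : list trig) (t : trig) (r : nat) : Prop :=
  exists rs, Forall2 (arank F D)
               (map (subst_atom (snd t)) (body (fst t))) rs /\
             r = S (max_list rs).

Definition depth_le (F : factbase) (D : list trig) (d : nat) : Prop :=
  forall a r, arank F D a r -> r <= d.

Definition breadth_first (X : chase_variant) (Rs : rule -> Prop)
    (F : factbase) (D : list trig) : Prop :=
  (forall j j' rj rj', j <= j' -> j' < length D ->
     trank F D (nth j D trig_dflt) rj -> trank F D (nth j' D trig_dflt) rj' ->
     rj <= rj') /\
  (forall j k, j < length D -> trank F D (nth j D trig_dflt) k ->
     (forall j', j < j' -> j' < length D -> ~ trank F D (nth j' D trig_dflt) k) ->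
     forall t, applicable X Rs F (firstn (S j) D) t ->
       trank F (firstn (S j) D) t (S k)).

(* Call a derivation greedy if each step applies an applicable trigger of least rank.  Along
   a greedy derivation trigger ranks never decrease (a trigger either was already applicable one
   step earlier, or uses an atom produced by the previous trigger, which has that trigger's
   rank), so a greedy derivation that cannot be extended is breadth-first.
   Any X-chase derivation A embeds into a derivation B closed under the chase: process the
   triggers of A in order, map each to a trigger of B that blocks its image, and send its fresh
   variables to those of that trigger.  The resulting term map is injective on the terms of A,
   hence so is the map on triggers.  Embedding into the terminating D bounds the length of all
   chase derivations, so the greedy construction terminates with some D'.  Embedding D into D',
   choosing blocking triggers of least rank, does not increase ranks; since |D'| <= |D| the
   trigger map is onto, so every atom of D' is the image of an atom of D and
   depth(D') <= depth(D). *)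

From Stdlib Require Import List Arith Lia Classical ClassicalEpsilon.
Import ListNotations.

Lemma firstn_S_nth {A} (l : list A) n d : n < length l ->
  firstn (S n) l = firstn n l ++ [nth n l d].
Proof.
  revert n; induction l as [|x l IH]; intros [|n] Hn; simpl in *; try lia; auto.
  rewrite IH by lia. reflexivity.
Qed.

Lemma In_firstn_nth {A} (l : list A) n t d : In t (firstn n l) ->
  exists k, k < n /\ k < length l /\ t = nth k l d.
Proof.
  revert n; induction l as [|x l IH]; intros [|n] H; simpl in *; try tauto.
  destruct H as [<-|H]; [exists 0; repeat split; lia|].
  destruct (IH _ H) as (k & ? & ? & ->). exists (S k); repeat split; auto; lia.
Qed.

Lemma nth_In_firstn {A} (l : list A) n k d : k < n -> k < length l ->
  In (nth k l d) (firstn n l).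
Proof.
  intros. replace (nth k l d) with (nth k (firstn n l) d).
  - apply nth_In. rewrite length_firstn. lia.
  - rewrite nth_firstn. destruct (Nat.ltb_spec k n); [reflexivity|lia].
Qed.

Lemma In_firstn_le {A} (l : list A) i j t : i <= j -> In t (firstn i l) -> In t (firstn j l).
Proof.
  revert i j; induction l as [|x l IH]; intros [|i] [|j] Hij H; simpl in *; try tauto; try lia.
  destruct H; [auto|right; apply (IH i); auto; lia].
Qed.

Lemma max_list_upper l x : In x l -> x <= max_list l.
Proof.
  induction l as [|y l IH]; simpl; [tauto|]. intros [<-|H]; [|specialize (IH H)]; lia.
Qed.

Lemma max_list_least l k : (forall x, In x l -> x <= k) -> max_list l <= k.
Proof.
  induction l as [|x l IH]; simpl; intros H; [lia|].
  specialize (IH (fun y Hy => H y (or_intror Hy))). specialize (H x (or_introl eq_refl)). lia.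
Qed.

Lemma Forall2_In_l {A B} (P : A -> B -> Prop) l rs x :
  Forall2 P l rs -> In x l -> exists r, In r rs /\ P x r.
Proof.
  induction 1 as [|y r l rs Hyr _ IH]; simpl; [tauto|]. intros [<-|Hx]; [eauto|].
  destruct (IH Hx) as (r' & ? & ?). eauto.
Qed.

Lemma Forall2_In_r {A B} (P : A -> B -> Prop) l rs r :
  Forall2 P l rs -> In r rs -> exists x, In x l /\ P x r.
Proof.
  induction 1 as [|y r' l rs Hyr _ IH]; simpl; [tauto|]. intros [<-|Hr]; [eauto|].
  destruct (IH Hr) as (x & ? & ?). eauto.
Qed.

Lemma Forall2_choice {A B} (P : A -> B -> Prop) l :
  (forall x, In x l -> exists r, P x r) -> exists rs, Forall2 P l rs.
Proof.
  induction l as [|x l IH]; intros H; [exists []; constructor|].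
  destruct (H x (or_introl eq_refl)) as [r Hr].
  destruct IH as [rs Hrs]; [intros; apply H; right; auto|].
  exists (r :: rs); constructor; auto.
Qed.

Lemma Forall2_map_l {A A' B} (P : A' -> B -> Prop) (f : A -> A') l rs :
  Forall2 (fun x r => P (f x) r) l rs -> Forall2 P (map f l) rs.
Proof. induction 1; simpl; constructor; auto. Qed.

Lemma Forall2_functional {A} (Q : A -> nat -> Prop) l rs rs' :
  Forall2 (fun x r => forall r', Q x r' -> r = r') l rs -> Forall2 Q l rs' -> rs = rs'.
Proof.
  intros H; revert rs'; induction H; intros rs' H'; inversion H'; subst; f_equal; auto.
Qed.

Lemma Forall2_max_list_le {A} (P Q : A -> nat -> Prop) l rs :
  Forall2 P l rs ->
  (forall x r, In x l -> P x r -> exists r', Q x r' /\ r' <= r) ->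
  exists rs', Forall2 Q l rs' /\ max_list rs' <= max_list rs.
Proof.
  induction 1 as [|x r l rs Hxr _ IH]; intros H; [exists []; split; [constructor|simpl; lia]|].
  destruct (H x r (or_introl eq_refl) Hxr) as (r' & ? & ?).
  destruct IH as (rs' & ? & ?); [intros; apply H; auto; right; auto|].
  exists (r' :: rs'); split; [constructor; auto|simpl; lia].
Qed.

Lemma nat_least (P : nat -> Prop) : (exists n, P n) ->
  exists n, P n /\ forall m, P m -> n <= m.
Proof.
  intros [n Hn]. induction n as [n IH] using lt_wf_ind.
  destruct (classic (exists m, m < n /\ P m)) as [(m & ? & ?)|Hno]; [apply (IH m); auto|].
  exists n; split; auto. intros m Hm. destruct (Nat.lt_ge_cases m n); auto.
  exfalso; eauto.
Qed.

Lemma nat_transition (P : nat -> Prop) a b : a <= b -> P a -> ~ P b ->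
  exists n, a <= n /\ n < b /\ P n /\ ~ P (S n).
Proof.
  induction 1 as [|b Hab IH]; intros Ha Hb; [tauto|].
  destruct (classic (P b)) as [Pb|Pb]; [exists b; repeat split; auto|].
  destruct (IH Ha Pb) as (n & ? & ? & ? & ?). exists n; repeat split; auto; lia.
Qed.

Section InjectiveIndex.
Variable f : nat -> nat.
Variable n : nat.
Hypothesis f_inj : forall i k, i < n -> k < n -> f i = f k -> i = k.

Let image_NoDup : NoDup (map f (seq 0 n)).
Proof.
  apply NoDup_map_NoDup_ForallPairs; [|apply seq_NoDup].
  intros x y Hx Hy. apply in_seq in Hx, Hy. apply f_inj; lia.
Qed.

Let image_incl m : (forall i, i < n -> f i < m) -> incl (map f (seq 0 n)) (seq 0 m).
Proof.
  intros Hr y Hy. apply in_map_iff in Hy as (x & <- & Hx). apply in_seq in Hx.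
  apply in_seq. specialize (Hr x). lia.
Qed.

Lemma injective_index_le m : (forall i, i < n -> f i < m) -> n <= m.
Proof.
  intros Hr. rewrite <- (length_seq n 0), <- (length_seq m 0), <- (length_map f).
  apply NoDup_incl_length; [exact image_NoDup|exact (image_incl m Hr)].
Qed.

Lemma injective_index_onto : (forall i, i < n -> f i < n) ->
  forall q, q < n -> exists i, i < n /\ f i = q.
Proof.
  intros Hr q Hq.
  assert (Hin : In q (map f (seq 0 n))).
  { apply (NoDup_length_incl (l' := seq 0 n) image_NoDup).
    - rewrite length_map, length_seq; lia.
    - exact (image_incl n Hr).
    - apply in_seq; lia. }
  apply in_map_iff in Hin as (x & ? & Hx). apply in_seq in Hx. exists x; split; auto; lia.
Qed.

End InjectiveIndex.

Notation tr D i := (nth i D trig_dflt).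

Definition body_image (t : trig) : list atom := map (subst_atom (snd t)) (body (fst t)).

Lemma hom_iff_image s B G : hom s B G <-> forall a, In a (map (subst_atom s) B) -> G a.
Proof.
  split; [intros H a Ha; apply in_map_iff in Ha as (b & <- & Hb); auto|].
  intros H b Hb. apply H, in_map; auto.
Qed.

Section Ranks.
Variable F : factbase.

Definition fires_in_order (D : list trig) : Prop :=
  forall i, i < length D -> hom (snd (tr D i)) (body (fst (tr D i))) (fb F (firstn i D)).

Lemma derivation_fires_in_order Rs D : derivation Rs F D -> fires_in_order D.
Proof. intros [Hd _] i Hi. apply Hd; auto. Qed.

Lemma arank_nested_ind (D : list trig) (P : atom -> nat -> Prop) :
  (forall a, F a -> P a 0) ->
  (forall a j rs, ~ F a -> j < length D -> produced (tr D j) a ->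
     (forall j', j' < j -> ~ produced (tr D j') a) ->
     Forall2 (arank F D) (body_image (tr D j)) rs ->
     Forall2 P (body_image (tr D j)) rs ->
     P a (S (max_list rs))) ->
  forall a r, arank F D a r -> P a r.
Proof.
  intros Hbase Hstep. fix IH 3. intros a r [a' Fa|a' j rs nF lt pr mn FA].
  - apply Hbase; auto.
  - apply (Hstep a' j rs nF lt pr mn FA).
    exact ((fix G l rs (FA : Forall2 (arank F D) l rs) : Forall2 P l rs :=
      match FA in Forall2 _ l rs return Forall2 P l rs with
      | Forall2_nil _ => Forall2_nil _
      | Forall2_cons x y Hxy Hr => Forall2_cons x y (IH x y Hxy) (G _ _ Hr)
      end) _ _ FA).
Qed.

Lemma arank_functional D a r1 r2 : arank F D a r1 -> arank F D a r2 -> r1 = r2.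
Proof.
  intros H; revert r2. pattern a, r1. revert a r1 H. apply arank_nested_ind.
  - intros a Fa r2 H2. inversion H2; subst; auto. contradiction.
  - intros a j rs nF lt pr mn FA IH r2 H2.
    inversion H2 as [? Fa|? j2 rs2 nF2 lt2 pr2 mn2 FA2]; subst; [contradiction|].
    assert (j = j2) as <-.
    { destruct (Nat.lt_trichotomy j j2) as [h|[h|h]]; auto; exfalso.
      - apply (mn2 j); auto.
      - apply (mn j2); auto. }
    do 2 f_equal. eapply Forall2_functional; [exact IH|exact FA2].
Qed.

Lemma arank_firstn D i a r : arank F (firstn i D) a r -> arank F D a r.
Proof.
  revert a r. apply arank_nested_ind; [intros; constructor; auto|].
  intros a j rs nF lt pr mn FA IH. rewrite length_firstn in lt.
  rewrite nth_firstn in *. destruct (Nat.ltb_spec j i); [|lia].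
  apply arank_step with j; auto; try lia.
  intros j' hj'. specialize (mn j' hj'). rewrite nth_firstn in mn.
  destruct (Nat.ltb_spec j' i); [auto|lia].
Qed.

Lemma fb_firstn_S D i a : i < length D ->
  fb F (firstn (S i) D) a <-> fb F (firstn i D) a \/ produced (tr D i) a.
Proof.
  intros Hi. rewrite (firstn_S_nth D i trig_dflt Hi). unfold fb. split.
  - intros [H|(t & Ht & Hp)]; auto. apply in_app_or in Ht as [Ht|[<-|[]]]; eauto.
  - intros [[H|(t & Ht & Hp)]|H]; auto; right.
    + exists t; split; auto; apply in_or_app; auto.
    + exists (tr D i); split; auto; apply in_or_app; right; left; auto.
Qed.

Lemma fb_firstn_le D i j a : i <= j -> fb F (firstn i D) a -> fb F (firstn j D) a.
Proof.
  intros H [h|(t & Ht & Hp)]; [left; auto|right; exists t; split; auto].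
  eapply In_firstn_le; eauto.
Qed.

Lemma fb_firstn D i a : fb F (firstn i D) a -> fb F D a.
Proof.
  intros [h|(t & Ht & Hp)]; [left; auto|right; exists t; split; auto].
  apply In_firstn_nth with (d := trig_dflt) in Ht as (k & ? & ? & ->). apply nth_In; auto.
Qed.

Lemma arank_exists_firstn D : fires_in_order D -> forall i a, fb F (firstn i D) a ->
  exists r, arank F (firstn i D) a r.
Proof.
  intros W. induction i as [|i IH]; intros a Ha.
  - destruct Ha as [Fa|(t & [] & _)]. exists 0; constructor; auto.
  - destruct (Nat.lt_ge_cases i (length D)) as [Hi|Hi].
    2:{ rewrite (firstn_all2 (n := S i)) in * by lia.
        rewrite (firstn_all2 (n := i)) in IH by lia. auto. }
    assert (Up : forall a r, arank F (firstn i D) a r -> arank F (firstn (S i) D) a r).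
    { intros b r Hr. apply (arank_firstn _ i).
      rewrite firstn_firstn. replace (Nat.min i (S i)) with i by lia. auto. }
    assert (Same : forall k, k <= i -> tr (firstn (S i) D) k = tr D k).
    { intros k hk. rewrite nth_firstn. destruct (Nat.ltb_spec k (S i)); auto; lia. }
    destruct (classic (fb F (firstn i D) a)) as [Hold|Hnew].
    { destruct (IH a Hold) as [r Hr]. exists r; apply Up; auto. }
    apply fb_firstn_S in Ha as [Ha|Hp]; auto; [contradiction|].
    destruct (Forall2_choice (arank F (firstn (S i) D)) (body_image (tr D i))) as [rs Hrs].
    { intros x Hx. apply in_map_iff in Hx as (b & <- & Hb).
      destruct (IH _ (W i Hi b Hb)) as [r Hr]. exists r; apply Up; auto. }
    exists (S (max_list rs)). apply arank_step with i; rewrite ?Same; auto.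
    + intro; apply Hnew; left; auto.
    + rewrite length_firstn; lia.
    + intros j' hj' Hp'. apply Hnew. right. exists (tr D j'); split.
      * apply nth_In_firstn; lia.
      * rewrite Same in Hp' by lia. auto.
Qed.

Lemma arank_exists D a : fires_in_order D -> fb F D a -> exists r, arank F D a r.
Proof.
  intros W H. rewrite <- (firstn_all D) in H.
  destruct (arank_exists_firstn D W _ a H) as [r Hr]. rewrite firstn_all in Hr. eauto.
Qed.

Lemma arank_firstn_inv D i a r : fires_in_order D -> fb F (firstn i D) a ->
  arank F D a r -> arank F (firstn i D) a r.
Proof.
  intros W H Hr. destruct (arank_exists_firstn D W i a H) as [r' Hr'].
  rewrite (arank_functional D a r r'); auto. eapply arank_firstn; eauto.
Qed.

Definition lrank (D : list trig) (L : list atom) (m : nat) : Prop :=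
  exists rs, Forall2 (arank F D) L rs /\ m = S (max_list rs).

Lemma lrank_functional D L m1 m2 : lrank D L m1 -> lrank D L m2 -> m1 = m2.
Proof.
  intros (rs1 & H1 & ->) (rs2 & H2 & ->). do 2 f_equal.
  eapply Forall2_functional; [|exact H2]. clear H2.
  induction H1; constructor; auto. intros; eapply arank_functional; eauto.
Qed.

Lemma lrank_exists D L : fires_in_order D -> (forall a, In a L -> fb F D a) ->
  exists m, lrank D L m.
Proof.
  intros W H. destruct (Forall2_choice (arank F D) L) as [rs Hrs].
  - intros; apply arank_exists; auto.
  - exists (S (max_list rs)), rs; auto.
Qed.

Lemma lrank_firstn_inv D i L m : fires_in_order D ->
  (forall a, In a L -> fb F (firstn i D) a) -> lrank D L m -> lrank (firstn i D) L m.
Proof.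
  intros W H (rs & Hr & ->). exists rs; split; auto.
  induction Hr; constructor.
  - apply arank_firstn_inv; auto. apply H; left; auto.
  - apply IHHr. intros; apply H; right; auto.
Qed.

Lemma lrank_gt D L m x r : lrank D L m -> In x L -> arank F D x r -> r < m.
Proof.
  intros (rs & H & ->) Hx Hr. destruct (Forall2_In_l _ _ _ _ H Hx) as (r' & Hin & Hr').
  rewrite (arank_functional D x r r'); auto. apply max_list_upper in Hin. lia.
Qed.

Lemma trank_exists D t : fires_in_order D -> hom (snd t) (body (fst t)) (fb F D) ->
  exists m, trank F D t m.
Proof. intros W H. apply lrank_exists; auto. apply hom_iff_image; auto. Qed.

Lemma trank_of_trig_exists D k : fires_in_order D -> k < length D -> exists m, trank F D (tr D k) m.
Proof.
  intros W Hk. apply trank_exists; auto. intros b Hb. eapply fb_firstn. apply W; eauto.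
Qed.

Lemma trank_firstn_inv D i t m : fires_in_order D ->
  hom (snd t) (body (fst t)) (fb F (firstn i D)) -> trank F D t m -> trank F (firstn i D) t m.
Proof. intros W H. apply lrank_firstn_inv; auto. apply hom_iff_image; auto. Qed.

Lemma arank_first_produced D n b m : n < length D ->
  fb F (firstn (S n) D) b -> ~ fb F (firstn n D) b -> trank F D (tr D n) m -> arank F D b m.
Proof.
  intros Hn Hb Hnb (rs & Hrs & ->). apply fb_firstn_S in Hb as [Hb|Hb]; auto; [contradiction|].
  apply arank_step with n; auto.
  - intro; apply Hnb; left; auto.
  - intros j' Hj' Hp. apply Hnb. right. exists (tr D j'); split; auto. apply nth_In_firstn; lia.
Qed.

End Ranks.

Definition map_atom (h : term -> term) (a : atom) : atom := (fst a, map h (snd a)).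
Definition map_trig (h : term -> term) (t : trig) : trig := (fst t, fun x => h (snd t x)).
Definition body_vars (t : trig) : list nat := vars_atoms (body (fst t)).
Definition fresh (t : trig) (z : nat) : term :=
  Null (body (fst t)) (head (fst t)) (map (snd t) (body_vars t)) z.
Definition fixes_plain (h : term -> term) : Prop := forall u, plain_term u -> h u = u.
Definition occurs (F : factbase) (D : list trig) (u : term) : Prop :=
  exists a, fb F D a /\ In u (snd a).

(* [equiv_trig X t s]: applying [s] makes [t] no longer X-applicable. *)
Definition equiv_trig (X : chase_variant) (t s : trig) : Prop :=
  fst s = fst t /\
  match X with
  | O => forall x, In x (body_vars t) -> snd s x = snd t x
  | SO => forall x, frontier (fst t) x -> snd s x = snd t x
  end.

Lemma In_vars_atoms x B : In x (vars_atoms B) <-> exists b, In b B /\ In (Var x) (snd b).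
Proof.
  unfold vars_atoms. rewrite in_flat_map. split.
  - intros (b & Hb & Hx). apply in_flat_map in Hx as ([] & Hu & Hx); simpl in Hx; try tauto.
    destruct Hx as [<-|[]]. eauto.
  - intros (b & Hb & Hx). exists b; split; auto. apply in_flat_map. exists (Var x); simpl; auto.
Qed.

Lemma plain_atom_term a u : plain_atom a -> In u (snd a) -> plain_term u.
Proof. intros H. apply Forall_forall, H. Qed.

Lemma subst_atom_comp b s h : plain_atom b -> fixes_plain h ->
  subst_atom (fun x => h (s x)) b = map_atom h (subst_atom s b).
Proof.
  intros Hp Hh. unfold subst_atom, map_atom; simpl. f_equal. rewrite map_map.
  apply map_ext_in. intros u Hu. pose proof (plain_atom_term _ _ Hp Hu).
  destruct u; simpl in *; auto; rewrite Hh; simpl; auto.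
Qed.

Lemma map_atom_plain a h : plain_atom a -> fixes_plain h -> map_atom h a = a.
Proof.
  intros Hp Hh. destruct a as [p l]; unfold map_atom; simpl. f_equal.
  rewrite <- (map_id l) at 2. apply map_ext_in. intros u Hu. apply Hh.
  eapply plain_atom_term; eauto.
Qed.

Lemma body_image_map_trig t h : Forall plain_atom (body (fst t)) -> fixes_plain h ->
  body_image (map_trig h t) = map (map_atom h) (body_image t).
Proof.
  intros Hp Hh. unfold body_image, map_trig; simpl. rewrite map_map. apply map_ext_in.
  intros b Hb. apply subst_atom_comp; auto. rewrite Forall_forall in Hp; auto.
Qed.

Lemma body_image_ext t t' : fst t = fst t' ->
  (forall x, In x (body_vars t) -> snd t x = snd t' x) -> body_image t = body_image t'.
Proof.
  intros E Ha. unfold body_image. rewrite <- E. apply map_ext_in. intros b Hb.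
  unfold subst_atom. f_equal. apply map_ext_in. intros [] Hu; simpl; auto.
  apply Ha. apply In_vars_atoms. eauto.
Qed.

Lemma sk_body t x : In x (body_vars t) -> sk t x = snd t x.
Proof.
  intros H. unfold sk. replace (existsb _ _) with true; auto.
  symmetry. apply existsb_exists. exists x; split; auto. apply Nat.eqb_refl.
Qed.

Lemma sk_fresh t x : ~ In x (body_vars t) -> sk t x = fresh t x.
Proof.
  intros H. unfold sk. destruct (existsb _ _) eqn:E; auto.
  apply existsb_exists in E as (y & Hy & Exy). apply Nat.eqb_eq in Exy as ->. contradiction.
Qed.

Lemma same_trig_sym t t' : same_trig t t' -> same_trig t' t.
Proof. intros [E H]. split; auto. intros x Hx. rewrite <- E in Hx. symmetry; auto. Qed.

Lemma fresh_inj t t' z z' : fresh t z = fresh t' z' -> z = z' /\ same_trig t t'.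
Proof.
  unfold fresh. intros E. injection E as E1 E2 E3 E4. split; auto. split.
  - destruct t as [[b h] s], t' as [[b' h'] s']; simpl in *; subst; auto.
  - intros x Hx. unfold body_vars in E3. rewrite <- E1 in E3.
    apply map_ext_in_iff with (a := x) in E3; auto.
Qed.

Lemma map_atom_sk_head t s h A0 : wf_rule (fst t) -> fst s = fst t ->
  (forall x, frontier (fst t) x -> snd s x = h (snd t x)) ->
  (forall z, ~ In z (body_vars t) -> h (fresh t z) = fresh s z) -> fixes_plain h ->
  In A0 (head (fst t)) -> map_atom h (subst_atom (sk t) A0) = subst_atom (sk s) A0.
Proof.
  intros [_ Hw] Es Hf Hn Hh HA. assert (Hp : plain_atom A0) by (rewrite Forall_forall in Hw; auto).
  unfold map_atom, subst_atom; simpl. f_equal. rewrite map_map. apply map_ext_in. intros u Hu.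
  pose proof (plain_atom_term _ _ Hp Hu) as Hpl. destruct u; simpl in *; try tauto.
  - apply Hh; exact I.
  - assert (Bv : body_vars s = body_vars t) by (unfold body_vars; rewrite Es; auto).
    destruct (in_dec Nat.eq_dec x (body_vars t)) as [Hi|Hi].
    + rewrite (sk_body t x Hi), sk_body by (rewrite Bv; auto). symmetry. apply Hf.
      split; auto. apply In_vars_atoms. eauto.
    + rewrite (sk_fresh t x Hi), sk_fresh by (rewrite Bv; auto). auto.
Qed.

Lemma produced_term_cases t a u : wf_rule (fst t) -> produced t a -> In u (snd a) ->
  plain_term u \/ (exists x, In x (body_vars t) /\ u = snd t x) \/
  (exists z, ~ In z (body_vars t) /\ u = fresh t z).
Proof.
  intros [_ Hw] Hp Hu. apply in_map_iff in Hp as (A0 & <- & HA).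
  assert (Hpl : plain_atom A0) by (rewrite Forall_forall in Hw; auto).
  apply in_map_iff in Hu as (v & <- & Hv).
  pose proof (plain_atom_term _ _ Hpl Hv). destruct v as [| x |]; simpl in *; auto; try tauto.
  destruct (in_dec Nat.eq_dec x (body_vars t)) as [Hi|Hi].
  - right; left. exists x; split; auto. apply sk_body; auto.
  - right; right. exists x; split; auto. apply sk_fresh; auto.
Qed.

Lemma occurs_body_var F L t x : In x (body_vars t) -> hom (snd t) (body (fst t)) (fb F L) ->
  occurs F L (snd t x).
Proof.
  intros Hx Hh. apply In_vars_atoms in Hx as (b & Hb & Hv).
  exists (subst_atom (snd t) b). split; auto. apply in_map_iff. exists (Var x); auto.
Qed.

Lemma equiv_trig_frontier X t s : equiv_trig X t s ->
  fst s = fst t /\ forall x, frontier (fst t) x -> snd s x = snd t x.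
Proof. destruct X; intros [E H]; split; auto. intros x [Hx _]; auto. Qed.

Lemma equiv_trig_ext X t t' s : fst t = fst t' ->
  (forall x, In x (body_vars t) -> snd t x = snd t' x) -> equiv_trig X t s -> equiv_trig X t' s.
Proof.
  intros E Ha [E2 H].
  assert (Bv : body_vars t' = body_vars t) by (unfold body_vars; rewrite E; auto).
  split; [congruence|]. destruct X; intros x Hx.
  - rewrite Bv in Hx. rewrite <- Ha; auto.
  - rewrite <- E in Hx. rewrite <- Ha; auto. apply Hx.
Qed.

Lemma applicable_not_equiv X Rs F L t t' : applicable X Rs F L t -> In t' L -> ~ equiv_trig X t t'.
Proof.
  intros Ha Hin [E He]. destruct X; simpl in Ha.
  - destruct Ha as (_ & _ & Hn). apply Hn. exists t'; split; auto. split; auto.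
    intros x Hx. apply He. unfold body_vars; rewrite <- E; auto.
  - destruct Ha as (_ & Hn). apply Hn. eauto.
Qed.

Lemma not_applicable_equiv X Rs F L t : Rs (fst t) -> hom (snd t) (body (fst t)) (fb F L) ->
  ~ applicable X Rs F L t -> exists t', In t' L /\ equiv_trig X t t'.
Proof.
  intros HR Hh Hna. apply NNPP. intros Hn. apply Hna.
  assert (HO : O_applicable Rs F L t).
  { repeat split; auto. intros (t' & Hin & [E Hs]). apply Hn. exists t'; split; auto.
    assert (Hb : forall x, In x (body_vars t) -> snd t' x = snd t x).
    { intros x Hx. apply Hs. unfold body_vars in Hx. rewrite E; auto. }
    destruct X; split; auto. intros x Hx. apply Hb, Hx. }
  destruct X; [exact HO|split; [exact HO|]].
  intros (t' & Hin & E & Hs). apply Hn. exists t'; split; auto. split; auto.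
Qed.

Lemma derivation_distinct Rs F D i j : derivation Rs F D -> i <> j ->
  i < length D -> j < length D -> ~ same_trig (tr D i) (tr D j).
Proof.
  intros [_ Hd] Hij Hi Hj Hs. destruct (Nat.lt_gt_cases i j) as [[h|h] _]; auto.
  - apply (Hd i j); auto.
  - apply (Hd j i); auto. apply same_trig_sym; auto.
Qed.

Lemma occurs_firstn_le F D i j u : i <= j -> occurs F (firstn i D) u -> occurs F (firstn j D) u.
Proof. intros H (a & Ha & Hu). exists a; split; auto. eapply fb_firstn_le; eauto. Qed.

Lemma occurs_firstn_S F D i u : i < length D -> wf_rule (fst (tr D i)) ->
  hom (snd (tr D i)) (body (fst (tr D i))) (fb F (firstn i D)) ->
  occurs F (firstn (S i) D) u -> occurs F (firstn i D) u \/ plain_term u \/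
  exists z, ~ In z (body_vars (tr D i)) /\ u = fresh (tr D i) z.
Proof.
  intros Hi Hw Hh (a & Ha & Hu). apply fb_firstn_S in Ha as [Ha|Ha]; auto.
  - left; exists a; auto.
  - destruct (produced_term_cases _ _ _ Hw Ha Hu) as [H|[(x & Hx & ->)|H]]; auto.
    left. apply occurs_body_var; auto.
Qed.

Lemma occurs_plain_or_fresh F D : (forall a, F a -> plain_atom a) -> fires_in_order F D ->
  (forall k, k < length D -> wf_rule (fst (tr D k))) ->
  forall i u, occurs F (firstn i D) u -> plain_term u \/
    exists k z, k < i /\ k < length D /\ ~ In z (body_vars (tr D k)) /\ u = fresh (tr D k) z.
Proof.
  intros HF W HW. induction i as [|i IH]; intros u Hu.
  - destruct Hu as (a & [Fa|(t & [] & _)] & Hu). left. eapply plain_atom_term; eauto.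
  - destruct (Nat.lt_ge_cases i (length D)) as [Hi|Hi].
    + destruct (occurs_firstn_S F D i u Hi (HW i Hi) (W i Hi) Hu) as [H|[H|(z & Hz & ->)]]; auto.
      * destruct (IH u H) as [H'|(k & z & ? & ? & ? & ->)]; auto.
        right; exists k, z; repeat split; auto.
      * right; exists i, z; repeat split; auto.
    + rewrite (firstn_all2 (n := S i)) in Hu by lia.
      rewrite <- (firstn_all2 (n := i) D) in Hu by lia.
      destruct (IH u Hu) as [H'|(k & z & ? & ? & ? & ->)]; auto.
      right; exists k, z; repeat split; auto.
Qed.

Lemma equiv_trig_reflect X h t1 t2 s :
  equiv_trig X (map_trig h t1) s -> equiv_trig X (map_trig h t2) s ->
  (forall x, In x (body_vars t2) -> h (snd t1 x) = h (snd t2 x) -> snd t1 x = snd t2 x) ->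
  equiv_trig X t2 t1.
Proof.
  intros [E1 H1] [E2 H2] Hinj. simpl in E1, E2.
  assert (E : fst t1 = fst t2) by congruence.
  split; auto. destruct X; intros x Hx.
  - apply Hinj; auto. transitivity (snd s x); [symmetry; apply H1|apply H2; exact Hx].
    unfold body_vars in *; simpl. rewrite E; exact Hx.
  - apply Hinj; [apply Hx|]. transitivity (snd s x); [symmetry; apply H1|apply H2; exact Hx].
    simpl. rewrite E; exact Hx.
Qed.

Definition redirect (t s : trig) (h : term -> term) (u : term) : term :=
  match u with
  | Null _ _ _ z => if excluded_middle_informative (u = fresh t z) then fresh s z else h u
  | _ => h u
  end.

Lemma redirect_other t s h u : (forall z, u <> fresh t z) -> redirect t s h u = h u.
Proof.
  intros Hu. destruct u; simpl; auto.
  destruct excluded_middle_informative as [e|]; auto. exfalso; eapply Hu; eauto.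
Qed.

Lemma redirect_fresh t s h z : redirect t s h (fresh t z) = fresh s z.
Proof.
  unfold redirect, fresh at 1. destruct excluded_middle_informative as [|n]; auto.
  exfalso; apply n; reflexivity.
Qed.

Lemma redirect_fixes_plain t s h : fixes_plain h -> fixes_plain (redirect t s h).
Proof. intros Hh [] Hu; simpl in *; try tauto; apply Hh; exact I. Qed.

(* [Q] is what the trigger chosen to block [t] is known to satisfy: nothing for the
   length bound, rank domination for the depth bound. *)
Definition covers (X : chase_variant) (F : factbase) (Rs : rule -> Prop) (B : list trig)
    (Q : trig -> list atom -> Prop) : Prop :=
  forall t, Rs (fst t) -> hom (snd t) (body (fst t)) (fb F B) ->
    exists p, p < length B /\ equiv_trig X t (tr B p) /\ Q (tr B p) (body_image t).

Section Embedding.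
Variable X : chase_variant.
Variable F : factbase.
Variable Rs : rule -> Prop.
Hypothesis HF : forall a, F a -> plain_atom a.
Hypothesis HR : forall R, Rs R -> wf_rule R.
Variables A B : list trig.
Variable Q : trig -> list atom -> Prop.
Hypothesis A_chase : chase_derivation X Rs F A.
Hypothesis B_derivation : derivation Rs F B.
Hypothesis B_covers : covers X F Rs B Q.

Definition tracks (h : term -> term) (idx : nat -> nat) (k : nat) : Prop :=
  idx k < length B /\ equiv_trig X (map_trig h (tr A k)) (tr B (idx k)) /\
  Q (tr B (idx k)) (body_image (map_trig h (tr A k))) /\
  forall z, ~ In z (body_vars (tr A k)) -> h (fresh (tr A k) z) = fresh (tr B (idx k)) z.

Record embeds_upto (i : nat) (h : term -> term) (idx : nat -> nat) : Prop := {
  emb_fixes : fixes_plain h;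
  emb_tracks : forall k, k < i -> tracks h idx k;
  emb_idx_inj : forall k k', k < i -> k' < i -> idx k = idx k' -> k = k';
  emb_fb : forall a, fb F (firstn i A) a -> fb F B (map_atom h a);
  emb_inj : forall u v, occurs F (firstn i A) u -> occurs F (firstn i A) v -> h u = h v -> u = v
}.

Let A_fires : fires_in_order F A.
Proof. exact (derivation_fires_in_order F Rs A (proj1 A_chase)). Qed.

Let A_rules k : k < length A -> Rs (fst (tr A k)).
Proof. intros; apply A_chase; auto. Qed.

Let A_wf k : k < length A -> wf_rule (fst (tr A k)).
Proof. intros; apply HR, A_rules; auto. Qed.

Lemma embeds_upto_0 : embeds_upto 0 (fun u => u) (fun _ => 0).
Proof.
  split; try (intros; lia); auto. intros u _; reflexivity.
  intros a [Fa|(t & [] & _)]. left. rewrite map_atom_plain; auto. intros u _; auto.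
Qed.

Lemma tracks_produced_eq h idx k A0 : fixes_plain h -> k < length A -> tracks h idx k ->
  In A0 (head (fst (tr A k))) ->
  map_atom h (subst_atom (sk (tr A k)) A0) = subst_atom (sk (tr B (idx k))) A0.
Proof.
  intros Hh Hk (_ & Eq & _ & Hfresh) HA. apply equiv_trig_frontier in Eq as [Es Ef].
  apply map_atom_sk_head; auto.
Qed.

Lemma tracks_head h idx k : tracks h idx k -> head (fst (tr B (idx k))) = head (fst (tr A k)).
Proof. intros (_ & [Es _] & _). simpl in Es. rewrite Es; auto. Qed.

Lemma tracks_produced h idx k a : fixes_plain h -> k < length A -> tracks h idx k ->
  produced (tr A k) a -> produced (tr B (idx k)) (map_atom h a).
Proof.
  intros Hh Hk Htr Ha. apply in_map_iff in Ha as (A0 & <- & HA).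
  rewrite (tracks_produced_eq h idx k A0); auto. apply in_map. rewrite (tracks_head h idx k); auto.
Qed.

Lemma tracks_produced_inv h idx k b : fixes_plain h -> k < length A -> tracks h idx k ->
  produced (tr B (idx k)) b -> exists a, produced (tr A k) a /\ b = map_atom h a.
Proof.
  intros Hh Hk Htr Hb. apply in_map_iff in Hb as (A0 & <- & HA).
  rewrite (tracks_head h idx k) in HA; auto.
  exists (subst_atom (sk (tr A k)) A0). split; [apply in_map; auto|].
  symmetry; apply tracks_produced_eq; auto.
Qed.

Section Step.
Variables (i : nat) (h : term -> term) (idx : nat -> nat) (p : nat).
Hypothesis Hi : i < length A.
Hypothesis Hemb : embeds_upto i h idx.
Hypothesis Hp : p < length B.
Hypothesis Hequiv : equiv_trig X (map_trig h (tr A i)) (tr B p).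
Hypothesis HQ : Q (tr B p) (body_image (map_trig h (tr A i))).

Local Notation h' := (redirect (tr A i) (tr B p) h).
Local Notation idx' := (fun k => if k =? i then p else idx k).

Lemma fresh_before_neq k z z' : k < i -> fresh (tr A k) z <> fresh (tr A i) z'.
Proof.
  intros Hk E. apply fresh_inj in E as [_ E].
  apply (derivation_distinct Rs F A k i); auto; try lia. apply A_chase.
Qed.

Lemma fresh_not_occurs_before u z : occurs F (firstn i A) u -> u <> fresh (tr A i) z.
Proof.
  intros Hu ->.
  destruct (occurs_plain_or_fresh F A HF A_fires A_wf i _ Hu) as [H|(k & z' & ? & ? & ? & E)].
  - exact H.
  - symmetry in E. exact (fresh_before_neq k z' z ltac:(lia) E).
Qed.

Lemma redirect_before u : occurs F (firstn i A) u -> h' u = h u.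
Proof. intros Hu. apply redirect_other. intros z. apply fresh_not_occurs_before; auto. Qed.

Lemma body_var_occurs_before k x : k <= i -> In x (body_vars (tr A k)) ->
  occurs F (firstn i A) (snd (tr A k) x).
Proof.
  intros Hk Hx. apply (occurs_firstn_le F A k); auto. apply occurs_body_var; auto.
  apply A_fires; lia.
Qed.

Lemma map_trig_redirect_body k x : k <= i -> In x (body_vars (tr A k)) ->
  snd (map_trig h (tr A k)) x = snd (map_trig h' (tr A k)) x.
Proof. intros Hk Hx. simpl. symmetry. apply redirect_before, body_var_occurs_before; auto. Qed.

Lemma tracks_redirect k : k <= i -> tracks h' idx' k.
Proof.
  intros Hk.
  assert (Hequiv_ext : forall s, equiv_trig X (map_trig h (tr A k)) s ->
                                  equiv_trig X (map_trig h' (tr A k)) s).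
  { intros s. apply equiv_trig_ext; [reflexivity|]. intros x; apply map_trig_redirect_body; auto. }
  assert (Himage : body_image (map_trig h (tr A k)) = body_image (map_trig h' (tr A k))).
  { apply body_image_ext; auto. intros x; apply map_trig_redirect_body; auto. }
  unfold tracks; cbv beta. destruct (Nat.eqb_spec k i) as [->|Hki].
  - split; [exact Hp|]. split; [apply Hequiv_ext, Hequiv|].
    split; [rewrite <- Himage; exact HQ|]. intros z _. apply redirect_fresh.
  - destruct (emb_tracks _ _ _ Hemb k ltac:(lia)) as (? & Ek & Qk & Nk).
    split; [auto|]. split; [apply Hequiv_ext, Ek|]. split; [rewrite <- Himage; exact Qk|].
    intros z Hz. rewrite redirect_other; auto. intros z'. apply fresh_before_neq; lia.
Qed.

Lemma new_index_unused k : k < i -> idx k <> p.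
Proof.
  intros Hk E. destruct (emb_tracks _ _ _ Hemb k Hk) as (_ & Ek & _ & _). rewrite E in Ek.
  apply (applicable_not_equiv X Rs F (firstn i A) (tr A i) (tr A k)).
  - apply A_chase; auto.
  - apply nth_In_firstn; lia.
  - apply (equiv_trig_reflect X h _ _ _ Ek Hequiv). intros x Hx.
    assert (fst (tr A k) = fst (tr A i)) as Ekt.
    { destruct Ek as [E1 _], Hequiv as [E2 _]. simpl in *. congruence. }
    apply (emb_inj _ _ _ Hemb); apply body_var_occurs_before; auto; try lia.
    unfold body_vars; rewrite Ekt; auto.
Qed.

Lemma image_before u : occurs F (firstn i A) u ->
  (plain_term u /\ h u = u) \/
  exists k z, k < i /\ u = fresh (tr A k) z /\ h u = fresh (tr B (idx k)) z.
Proof.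
  intros Hu. destruct (occurs_plain_or_fresh F A HF A_fires A_wf i u Hu)
    as [H|(k & z & ? & ? & ? & ->)].
  - left; split; auto. apply (emb_fixes _ _ _ Hemb); auto.
  - right. exists k, z; repeat split; auto. apply (emb_tracks _ _ _ Hemb); auto.
Qed.

Lemma image_before_plain u : occurs F (firstn i A) u -> plain_term (h u) -> h u = u.
Proof. intros Hu Hpl. destruct (image_before u Hu) as [[_ E]|(k & z & _ & _ & E)]; auto.
  rewrite E in Hpl. destruct Hpl. Qed.

Lemma image_before_not_new u z : occurs F (firstn i A) u -> h u <> fresh (tr B p) z.
Proof.
  intros Hu E0. destruct (image_before u Hu) as [[Hn E1]|(k & z' & Hk & -> & E1)].
  - rewrite E1 in E0. subst. exact Hn.
  - rewrite E1 in E0. apply fresh_inj in E0 as [_ E0].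
    apply (derivation_distinct Rs F B (idx k) p); auto.
    + apply new_index_unused; auto.
    + apply (emb_tracks _ _ _ Hemb); auto.
Qed.

Lemma redirect_value w : occurs F (firstn (S i) A) w ->
  (occurs F (firstn i A) w /\ h' w = h w) \/ (plain_term w /\ h' w = w) \/
  (exists z, w = fresh (tr A i) z /\ h' w = fresh (tr B p) z).
Proof.
  intros Hw. destruct (occurs_firstn_S F A i w Hi (A_wf i Hi) (A_fires i Hi) Hw)
    as [H|[H|(z & Hz & ->)]].
  - left; split; auto. apply redirect_before; auto.
  - right; left; split; auto. apply redirect_fixes_plain; auto. apply Hemb.
  - right; right. exists z; split; auto. apply redirect_fresh.
Qed.

Lemma redirect_injective u v : occurs F (firstn (S i) A) u -> occurs F (firstn (S i) A) v ->
  h' u = h' v -> u = v.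
Proof.
  intros Hu Hv E.
  destruct (redirect_value u Hu) as [[Ou Eu]|[[Nu Eu]|(z & -> & Eu)]];
  destruct (redirect_value v Hv) as [[Ov Ev]|[[Nv Ev]|(z' & -> & Ev)]];
  rewrite Eu, Ev in E.
  - apply (emb_inj _ _ _ Hemb); auto.
  - rewrite <- E. symmetry. apply image_before_plain; auto. rewrite E; auto.
  - exfalso; eapply image_before_not_new; eauto.
  - rewrite E. apply image_before_plain; auto. rewrite <- E; auto.
  - auto.
  - subst. destruct Nu.
  - exfalso; eapply image_before_not_new; eauto.
  - subst. destruct Nv.
  - apply fresh_inj in E as [-> _]; auto.
Qed.

Lemma redirect_fb a : fb F (firstn (S i) A) a -> fb F B (map_atom h' a).
Proof.
  intros Ha. apply fb_firstn_S in Ha as [Ha|Ha]; auto.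
  - replace (map_atom h' a) with (map_atom h a); [apply Hemb; auto|].
    unfold map_atom; f_equal. apply map_ext_in. intros u Hu. symmetry.
    apply redirect_before. exists a; auto.
  - right. exists (tr B p). split; [apply nth_In; auto|].
    apply (tracks_produced h' idx') in Ha; auto.
    + rewrite Nat.eqb_refl in Ha. exact Ha.
    + apply redirect_fixes_plain, Hemb.
    + apply tracks_redirect; auto.
Qed.

End Step.

Lemma embeds_upto_S i h idx : i < length A -> embeds_upto i h idx ->
  exists h' idx', embeds_upto (S i) h' idx'.
Proof.
  intros Hi Hemb.
  destruct (B_covers (map_trig h (tr A i))) as (p & Hp & Hequiv & HQ).
  { apply A_rules; auto. }
  { intros b Hb. simpl. rewrite subst_atom_comp; [apply Hemb, A_fires; auto| |apply Hemb].
    destruct (A_wf i Hi) as [Hbody _]. rewrite Forall_forall in Hbody; auto. }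
  exists (redirect (tr A i) (tr B p) h), (fun k => if k =? i then p else idx k). split.
  - apply redirect_fixes_plain, Hemb.
  - intros k Hk. apply tracks_redirect; auto; lia.
  - intros k k' Hk Hk' E.
    destruct (Nat.eqb_spec k i) as [->|Hki], (Nat.eqb_spec k' i) as [->|Hk'i]; auto.
    + exfalso; eapply (new_index_unused _ _ _ _ Hi Hemb Hp Hequiv k'); [lia|eauto].
    + exfalso; eapply (new_index_unused _ _ _ _ Hi Hemb Hp Hequiv k); [lia|eauto].
    + apply (emb_idx_inj _ _ _ Hemb); auto; lia.
  - eapply redirect_fb; eauto.
  - eapply redirect_injective; eauto.
Qed.

Lemma embedding_exists : exists h idx, fixes_plain h /\
  (forall k, k < length A -> tracks h idx k) /\
  (forall k k', k < length A -> k' < length A -> idx k = idx k' -> k = k').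
Proof.
  assert (H : forall i, i <= length A -> exists h idx, embeds_upto i h idx).
  { induction i as [|i IH]; intros Hi; [eauto using embeds_upto_0|].
    destruct IH as (h & idx & Hemb); [lia|]. eapply embeds_upto_S; eauto. }
  destruct (H (length A) (le_n _)) as (h & idx & Hemb). exists h, idx.
  split; [|split]; apply Hemb.
Qed.

End Embedding.

Section Greedy.
Variable X : chase_variant.
Variable F : factbase.
Variable Rs : rule -> Prop.

Definition greedy (D : list trig) : Prop :=
  chase_derivation X Rs F D /\
  forall i, i < length D -> forall t, applicable X Rs F (firstn i D) t ->
    forall m m', trank F (firstn i D) (tr D i) m -> trank F (firstn i D) t m' -> m <= m'.

Definition saturated (D : list trig) : Prop := forall t, ~ applicable X Rs F D t.

Lemma applicable_hom L t : applicable X Rs F L t ->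
  Rs (fst t) /\ hom (snd t) (body (fst t)) (fb F L).
Proof. destruct X; simpl; unfold SO_applicable, O_applicable; tauto. Qed.

Lemma applicable_not_applied L t : applicable X Rs F L t ->
  ~ (exists t', In t' L /\ same_trig t' t).
Proof. destruct X; simpl; unfold SO_applicable, O_applicable; tauto. Qed.

Lemma applicable_incl L L' t : incl L L' -> applicable X Rs F L' t ->
  hom (snd t) (body (fst t)) (fb F L) -> applicable X Rs F L t.
Proof.
  intros Hs Ha Hh. destruct X; simpl in *; unfold SO_applicable, O_applicable in *.
  - destruct Ha as (? & ? & Hn). repeat split; auto. intros (t' & ? & ?); apply Hn; eauto.
  - destruct Ha as ((? & ? & Hn) & Hn2). repeat split; auto.
    + intros (t' & ? & ?); apply Hn; eauto.
    + intros (t' & ? & ?); apply Hn2; eauto.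
Qed.

Lemma fb_snoc L s a : fb F L a -> fb F (L ++ [s]) a.
Proof.
  intros [H|(t & Ht & Hp)]; [left; auto|right; exists t; split; auto; apply in_or_app; auto].
Qed.

Lemma blocked_by_equiv L t s : applicable X Rs F L t -> ~ applicable X Rs F (L ++ [s]) t ->
  equiv_trig X t s.
Proof.
  intros Ha Hn. destruct (applicable_hom L t Ha) as [HRt Hh].
  destruct (not_applicable_equiv X Rs F (L ++ [s]) t HRt) as (t' & Hin & He); auto.
  { intros b Hb. apply fb_snoc, Hh; auto. }
  apply in_app_or in Hin as [Hin|[<-|[]]]; auto.
  exfalso; eapply applicable_not_equiv; eauto.
Qed.

Lemma greedy_fires D : greedy D -> fires_in_order F D.
Proof. intros [[DD _] _]. eapply derivation_fires_in_order; eauto. Qed.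

(* Either the next trigger was already applicable and was not preferred, or it
   uses an atom produced by the current one. *)
Lemma greedy_trank_S D i m m' : greedy D -> S i < length D -> trank F D (tr D i) m ->
  trank F D (tr D (S i)) m' -> m <= m'.
Proof.
  intros G Hi Tm Tm'. pose proof (greedy_fires D G) as W.
  destruct G as [[_ Happ] Hleast].
  set (t1 := tr D (S i)) in *.
  assert (At1 : applicable X Rs F (firstn (S i) D) t1) by (apply Happ; auto).
  destruct (classic (hom (snd t1) (body (fst t1)) (fb F (firstn i D)))) as [Hh|Hh].
  - assert (Ai : applicable X Rs F (firstn i D) t1).
    { apply (applicable_incl (firstn i D) (firstn (S i) D) t1); auto.
      intros x Hx; eapply In_firstn_le; [|exact Hx]; lia. }
    apply (Hleast i ltac:(lia) t1 Ai); apply trank_firstn_inv; auto. apply W; lia.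
  - apply not_all_ex_not in Hh as [b Hb]. apply imply_to_and in Hb as [Hb Hnb].
    assert (Hb' : fb F (firstn (S i) D) (subst_atom (snd t1) b)) by (apply W; auto).
    pose proof (arank_first_produced F D i _ _ ltac:(lia) Hb' Hnb Tm) as Ar.
    apply Nat.lt_le_incl. eapply lrank_gt; eauto. apply in_map; auto.
Qed.

Lemma greedy_trank_mono D j j' rj rj' : greedy D -> j <= j' -> j' < length D ->
  trank F D (tr D j) rj -> trank F D (tr D j') rj' -> rj <= rj'.
Proof.
  intros G Hjj'. revert rj'. induction Hjj' as [|j' Hjj' IH]; intros rj' Hj' T T'.
  - rewrite (lrank_functional F D (body_image (tr D j)) rj rj'); auto.
  - destruct (trank_of_trig_exists F D j' (greedy_fires D G) ltac:(lia)) as [m Hm].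
    specialize (IH m ltac:(lia) T Hm). pose proof (greedy_trank_S D j' m rj' G Hj' Hm T'). lia.
Qed.

Lemma greedy_arank_le D j k x r : greedy D -> j < length D -> trank F D (tr D j) k ->
  fb F (firstn (S j) D) x -> arank F D x r -> r <= k.
Proof.
  intros G Hj Tk Hx Hr. inversion Hr as [? Fx|? j0 rs0 nF lt0 pr0 mn0 FA0]; subst; [lia|].
  destruct Hx as [Fx|(t & Ht & Hp)]; [contradiction|].
  apply In_firstn_nth with (d := trig_dflt) in Ht as (q & Hq & Hq' & ->).
  assert (j0 <= q) by (destruct (Nat.le_gt_cases j0 q); auto; exfalso; apply (mn0 q); auto).
  eapply (greedy_trank_mono D j0 j); eauto; [lia|]. exists rs0; auto.
Qed.

Lemma greedy_breadth_first D : greedy D -> saturated D -> breadth_first X Rs F D.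
Proof.
  intros G C. pose proof (greedy_fires D G) as W. split.
  - intros j j' rj rj' H1 H2 T1 T2; exact (greedy_trank_mono D j j' rj rj' G H1 H2 T1 T2).
  - intros j k Hj Tk Hlast t At.
    destruct (applicable_hom _ _ At) as [HRt Ht].
    assert (Ht' : hom (snd t) (body (fst t)) (fb F D)).
    { intros b Hb. eapply fb_firstn, Ht; auto. }
    destruct (trank_exists F D t W Ht') as [m Tm].
    assert (Up : m <= S k).
    { destruct Tm as (rs & Hrs & ->). apply le_n_S, max_list_least. intros r Hr.
      destruct (Forall2_In_r _ _ _ _ Hrs Hr) as (x & Hx & Ar).
      eapply greedy_arank_le; eauto. apply in_map_iff in Hx as (b & <- & Hb). auto. }
    assert (Lo : S k <= m).
    { destruct (Nat.lt_ge_cases (S j) (length D)) as [HS|HS].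
      - destruct (trank_of_trig_exists F D (S j) W HS) as [m1 Hm1].
        assert (k <= m1) by (eapply (greedy_trank_mono D j (S j)); eauto).
        assert (m1 <> k) by (intros ->; apply (Hlast (S j)); auto).
        assert (m1 <= m).
        { apply (proj2 G (S j) HS t At); apply trank_firstn_inv; auto. }
        lia.
      - exfalso. apply (C t). rewrite (firstn_all2 (n := S j) D) in At by lia. exact At. }
    replace (S k) with m by lia. apply trank_firstn_inv; auto.
Qed.

Lemma firstn_snoc (D : list trig) t0 i : i <= length D -> firstn i (D ++ [t0]) = firstn i D.
Proof.
  intros H. rewrite firstn_app. replace (i - length D) with 0 by lia. apply app_nil_r.
Qed.

Lemma greedy_snoc D t0 m0 : greedy D -> applicable X Rs F D t0 -> trank F D t0 m0 ->
  (forall t m, applicable X Rs F D t -> trank F D t m -> m0 <= m) -> greedy (D ++ [t0]).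
Proof.
  intros G A0 T0 Min. destruct G as [[[Hfire Hdist] Happ] Hleast].
  assert (Len : length (D ++ [t0]) = S (length D)) by (rewrite length_app; simpl; lia).
  assert (Old : forall i, i < length D -> tr (D ++ [t0]) i = tr D i).
  { intros; apply app_nth1; auto. }
  assert (New : tr (D ++ [t0]) (length D) = t0).
  { rewrite app_nth2, Nat.sub_diag by lia. reflexivity. }
  split; [split; [split|]|]; rewrite Len.
  - intros i Hi. rewrite firstn_snoc by lia. destruct (Nat.lt_ge_cases i (length D)) as [Hi'|Hi'].
    + rewrite Old; auto.
    + replace i with (length D) by lia. rewrite New, firstn_all. apply applicable_hom; auto.
  - intros i j Hij Hj. rewrite Old by lia. destruct (Nat.lt_ge_cases j (length D)) as [Hj'|Hj'].
    + rewrite Old; auto.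
    + replace j with (length D) by lia. rewrite New.
      intro Hs; apply (applicable_not_applied D t0 A0); exists (tr D i); split; auto.
      apply nth_In; lia.
  - intros i Hi. rewrite firstn_snoc by lia. destruct (Nat.lt_ge_cases i (length D)) as [Hi'|Hi'].
    + rewrite Old; auto.
    + replace i with (length D) by lia. rewrite New, firstn_all. auto.
  - intros i Hi t At m m' Tm Tm'. rewrite firstn_snoc in * by lia.
    destruct (Nat.lt_ge_cases i (length D)) as [Hi'|Hi'].
    + rewrite Old in Tm by auto. eapply Hleast; eauto.
    + replace i with (length D) in * by lia. rewrite New, firstn_all in *.
      rewrite (lrank_functional F D (body_image t0) m m0); auto. eapply Min; eauto.
Qed.

Lemma greedy_extend D : greedy D -> ~ saturated D -> exists t0, greedy (D ++ [t0]).
Proof.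
  intros G Hns. apply not_all_not_ex in Hns as [t At].
  destruct (nat_least (fun m => exists t, applicable X Rs F D t /\ trank F D t m))
    as (m0 & (t0 & A0 & T0) & Min).
  { destruct (trank_exists F D t (greedy_fires D G)) as [m Tm]; [apply applicable_hom; auto|].
    eauto. }
  exists t0. apply (greedy_snoc D t0 m0); auto. intros t' m At' Tm'. apply Min; eauto.
Qed.

Lemma greedy_saturated_exists N : (forall D, chase_derivation X Rs F D -> length D <= N) ->
  exists D, greedy D /\ saturated D.
Proof.
  intros Bound.
  assert (Main : forall n D, greedy D -> N - length D <= n -> exists D', greedy D' /\ saturated D').
  { induction n as [|n IH]; intros D G Hn;
      (destruct (classic (saturated D)) as [Sat|NSat]; [eauto|]);
      destruct (greedy_extend D G NSat) as [t0 G'];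
      pose proof (Bound _ (proj1 G')) as B'; rewrite length_app in B'; simpl in B'.
    - lia.
    - apply (IH (D ++ [t0])); auto. rewrite length_app; simpl; lia. }
  apply (Main N []); [|simpl; lia].
  repeat split; intros; simpl in *; lia.
Qed.

Lemma exhaustive_saturated D : exhaustive X Rs F D -> saturated D.
Proof.
  intros E t At. rewrite <- (firstn_all D) in At.
  destruct (E (length D) t (le_n _) At) as [(k & ? & ? & _)|(k & ? & ? & Hn)]; [lia|].
  replace k with (length D) in Hn by lia. contradiction.
Qed.

Lemma saturated_exhaustive D : saturated D -> exhaustive X Rs F D.
Proof.
  intros C i t Hi At. right. exists (length D). split; [lia|split; [lia|]].
  rewrite firstn_all; apply C.
Qed.

Lemma saturated_covers D : saturated D -> covers X F Rs D (fun _ _ => True).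
Proof.
  intros C t HRt Hh. destruct (not_applicable_equiv X Rs F D t HRt Hh (C t)) as (t' & Hin & He).
  apply In_nth with (d := trig_dflt) in Hin as (p & Hp & <-). exists p; auto.
Qed.

Definition rank_dominated (D : list trig) (s : trig) (L : list atom) : Prop :=
  forall m, lrank F D L m -> exists m', trank F D s m' /\ m' <= m.

(* The trigger that blocks [t] is applied no later than [t] could be, hence has no larger rank. *)
Lemma greedy_saturated_covers D : greedy D -> saturated D -> covers X F Rs D (rank_dominated D).
Proof.
  intros G C t HRt Hh. pose proof (greedy_fires D G) as W.
  destruct (trank_exists F D t W Hh) as [m0 T0].
  enough (exists p, p < length D /\ equiv_trig X t (tr D p) /\
                    exists m', trank F D (tr D p) m' /\ m' <= m0) as (p & Hp & He & m' & Tm' & Le).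
  { exists p; split; [auto|split; [auto|]]. intros m Tm. exists m'.
    rewrite (lrank_functional F D (body_image t) m m0); auto. }
  destruct (nat_least (fun n => hom (snd t) (body (fst t)) (fb F (firstn n D)))) as (q & Hq & Mq).
  { exists (length D). rewrite firstn_all; auto. }
  assert (qle : q <= length D) by (apply Mq; rewrite firstn_all; auto).
  destruct (classic (applicable X Rs F (firstn q D) t)) as [Aq|NAq].
  - destruct (nat_transition (fun n => applicable X Rs F (firstn n D) t) q (length D))
      as (n & ? & Hn & An & NAn); auto.
    { rewrite firstn_all; apply C. }
    exists n. split; auto. split.
    { apply (blocked_by_equiv (firstn n D) t (tr D n) An). rewrite <- firstn_S_nth; auto. }
    destruct (trank_of_trig_exists F D n W Hn) as [m1 T1]. exists m1; split; auto.
    destruct (applicable_hom _ _ An) as [_ Hhn].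
    apply (proj2 G n Hn t An); apply trank_firstn_inv; auto.
  - destruct (not_applicable_equiv X Rs F (firstn q D) t HRt Hq NAq) as (t' & Hin & He).
    apply In_firstn_nth with (d := trig_dflt) in Hin as (p & Hpq & Hp & ->).
    exists p; split; auto; split; auto.
    destruct q as [|q']; [lia|].
    assert (Nh : ~ hom (snd t) (body (fst t)) (fb F (firstn q' D))).
    { intro H'. specialize (Mq q' H'). lia. }
    apply not_all_ex_not in Nh as [b Hb]. apply imply_to_and in Hb as [Hb Hnb].
    destruct (trank_of_trig_exists F D q' W ltac:(lia)) as [m1 T1].
    pose proof (arank_first_produced F D q' _ _ ltac:(lia) (Hq b Hb) Hnb T1) as Ar.
    assert (m1 < m0) by (eapply lrank_gt; eauto; apply in_map; auto).
    destruct (trank_of_trig_exists F D p W Hp) as [m2 T2]. exists m2; split; auto.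
    assert (m2 <= m1) by (eapply (greedy_trank_mono D p q'); eauto; lia). lia.
Qed.

End Greedy.

Section Depth.
Variable X : chase_variant.
Variable F : factbase.
Variable Rs : rule -> Prop.
Hypothesis HF : forall a, F a -> plain_atom a.
Hypothesis HR : forall R, Rs R -> wf_rule R.

Lemma chase_length_le D : chase_derivation X Rs F D -> saturated X F Rs D ->
  forall D', chase_derivation X Rs F D' -> length D' <= length D.
Proof.
  intros CD Sat D' CD'.
  destruct (embedding_exists X F Rs HF HR D' D (fun _ _ => True) CD' (proj1 CD)
              (saturated_covers X F Rs D Sat)) as (h & idx & _ & Htr & Hinj).
  apply (injective_index_le idx _ Hinj). intros i Hi. apply Htr; auto.
Qed.

Lemma arank_transfer D D' h idx : chase_derivation X Rs F D -> greedy X F Rs D' ->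
  fixes_plain h -> (forall k, k < length D -> tracks X D D' (rank_dominated F D') h idx k) ->
  forall a r, arank F D a r -> exists r', arank F D' (map_atom h a) r' /\ r' <= r.
Proof.
  intros CD G Hh Htr. apply arank_nested_ind.
  - intros a Fa. exists 0. rewrite map_atom_plain; auto. split; [constructor; auto|lia].
  - intros a j rs nF Hj Hprod _ _ IH.
    destruct (Forall2_max_list_le _ (fun x r' => arank F D' (map_atom h x) r') _ _ IH)
      as (rs' & Hrs' & Le); [intros x r0 _ H; exact H|].
    assert (Himage : lrank F D' (body_image (map_trig h (tr D j))) (S (max_list rs'))).
    { exists rs'; split; auto. rewrite body_image_map_trig; auto; [|apply HR, CD; auto].
      apply Forall2_map_l; auto. }
    destruct (Htr j Hj) as (Hidx & _ & Hdom & _).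
    destruct (Hdom _ Himage) as (m' & Tm' & Lm').
    eapply (tracks_produced X F Rs HR D D') in Hprod; eauto.
    assert (Fb : fb F D' (map_atom h a)).
    { right; exists (tr D' (idx j)); split; auto; apply nth_In; auto. }
    destruct (arank_exists F D' _ (greedy_fires X F Rs D' G) Fb) as [r0 Hr0].
    exists r0. split; auto.
    enough (r0 <= m') by lia.
    eapply greedy_arank_le; eauto. apply fb_firstn_S; auto.
Qed.

(* A greedy derivation no longer than D uses every trigger of the embedding, so all its
   atoms are images of atoms of D. *)
Lemma greedy_depth_le D D' : chase_derivation X Rs F D -> greedy X F Rs D' ->
  saturated X F Rs D' -> length D' <= length D -> forall d, depth_le F D d -> depth_le F D' d.
Proof.
  intros CD G Sat Hlen d Hd b r Hr.
  destruct (embedding_exists X F Rs HF HR D D' (rank_dominated F D') CD (proj1 (proj1 G))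
              (greedy_saturated_covers X F Rs D' G Sat)) as (h & idx & Hh & Htr & Hinj).
  inversion Hr as [? Fb|? j rs nF Hj Hprod mn FA]; subst; [lia|].
  destruct (injective_index_onto idx (length D) Hinj) with (q := j) as (k & Hk & <-).
  { intros i Hi. destruct (Htr i Hi) as (? & _). lia. }
  { lia. }
  destruct (tracks_produced_inv X F Rs HR D D' (rank_dominated F D') CD h idx k b)
    as (a & Ha & ->); auto.
  assert (Fa : fb F D a) by (right; exists (tr D k); split; auto; apply nth_In; auto).
  destruct (arank_exists F D a (derivation_fires_in_order F Rs D (proj1 CD)) Fa) as [r0 Hr0].
  destruct (arank_transfer D D' h idx CD G Hh Htr a r0 Hr0) as (r' & Hr' & Le).
  rewrite (arank_functional F D' _ _ _ Hr Hr'). specialize (Hd _ _ Hr0). lia.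
Qed.

End Depth.

Theorem proposition1 (X : chase_variant) (F : factbase) (Rs : rule -> Prop) :
  (forall a, F a -> plain_atom a) ->
  (forall R, Rs R -> wf_rule R) ->
  forall D : list trig,
    chase_derivation X Rs F D -> exhaustive X Rs F D ->
    exists D' : list trig,
      chase_derivation X Rs F D' /\ exhaustive X Rs F D' /\
      breadth_first X Rs F D' /\
      (forall d, depth_le F D d -> depth_le F D' d).
Proof.
  intros HF HR D CD Hexh.
  pose proof (exhaustive_saturated X F Rs D Hexh) as Sat.
  pose proof (chase_length_le X F Rs HF HR D CD Sat) as Bound.
  destruct (greedy_saturated_exists X F Rs (length D) Bound) as (D' & G & Sat').
  exists D'. split; [apply G|]. split; [|split].
  - apply saturated_exhaustive; auto.
  - apply greedy_breadth_first; auto.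
  - apply (greedy_depth_le X F Rs HF HR D D'); auto. apply Bound; auto. apply G.
Qed.
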